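(* If $\mathbf A$ is a complete perfect DqRA, then $\mathbf A\cong(\mathbf A_+)^+$ as DqRAs, via the map $\psi(a)=\{j\in J^\infty(\mathbf A)\mid j\leqslant a\}$.
   Context: A DqRA is a structure $(A,\wedge,\vee,\cdot,1,\sim,-,\neg)$ with $(A,\wedge,\vee)$ a distributive lattice, $(A,\cdot,1)$ a monoid, $a\cdot b\leqslant c\iff a\leqslant -(b\cdot{\sim}c)\iff b\leqslant{\sim}(-c\cdot a)$, $\neg\neg a=a$, $\neg(a\wedge b)=\neg a\vee\neg b$, and $\neg(a\cdot b)=\neg a+\neg b$ where $a+b=-({\sim}b\cdot{\sim}a)$. Complete perfect: complete, every element the join of completely join-irreducibles ($J^\infty(\mathbf A)$) below it and meet of completely meet-irreducibles above it. $\kappa(j)=\bigvee\{a\mid j\not\leqslant a\}$. $\mathbf A_+=(J^\infty(\mathbf A),I_1,\preccurlyeq,\circ,{}^\sim,{}^-,{}^\neg)$ with $I_1=\{i\in J^\infty(\mathbf A)\mid i\leqslant1\}$, $a\preccurlyeq b$ iff $b\leqslant a$, $c\in a\circ b$ iff $c\leqslant a\cdot b$, $a^\sim={\sim}\kappa(a)$, $a^-=-\kappa(a)$, $a^\neg=\neg\kappa(a)$. For such a structure $\mathbb W=(W,I,\preccurlyeq,\circ,{}^\sim,{}^-,{}^\neg)$, $\mathbb W^+=(\mathsf{Up}(W,\preccurlyeq),\cap,\cup,\circ,I,\sim,-,\neg)$ where $\mathsf{Up}$ is the set of upsets, $U\circ V=\bigcup\{x\circ y\mid x\in U,y\in V\}$,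 ${\sim}U=\{w\mid w^-\notin U\}$, $-U=\{w\mid w^\sim\notin U\}$, $\neg U=\{w\mid w^\neg\notin U\}$. *)

From Stdlib Require Import ClassicalEpsilon.

Record DqRA (A : Type) := {
  meet : A -> A -> A;
  join : A -> A -> A;
  mul  : A -> A -> A;
  one  : A;
  tl   : A -> A;
  mi   : A -> A;
  ng   : A -> A;
  meetA : forall a b c, meet a (meet b c) = meet (meet a b) c;
  joinA : forall a b c, join a (join b c) = join (join a b) c;
  meetC : forall a b, meet a b = meet b a;
  joinC : forall a b, join a b = join b a;
  meet_joinK : forall a b, meet a (join a b) = a;
  join_meetK : forall a b, join a (meet a b) = a;
  meet_joinDr : forall a b c, meet a (join b c) = join (meet a b) (meet a c);
  mulA : forall a b c, mul a (mul b c) = mul (mul a b) c;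
  mul1l : forall a, mul one a = a;
  mul1r : forall a, mul a one = a;
  resid_l : forall a b c, meet (mul a b) c = mul a b <-> meet a (mi (mul b (tl c))) = a;
  resid_r : forall a b c, meet (mul a b) c = mul a b <-> meet b (tl (mul (mi c) a)) = b;
  ngK : forall a, ng (ng a) = a;
  ng_meet : forall a b, ng (meet a b) = join (ng a) (ng b);
  ng_mul : forall a b, ng (mul a b) = mi (mul (tl (ng b)) (tl (ng a)))
}.

Arguments meet {A} d _ _.  Arguments join {A} d _ _.  Arguments mul {A} d _ _.
Arguments one {A} d.  Arguments tl {A} d _.  Arguments mi {A} d _.  Arguments ng {A} d _.

Section DqRADefs.
Context {A : Type} (D : DqRA A).

Definition le (a b : A) : Prop := meet D a b = a.

Definition add (a b : A) : A := mi D (mul D (tl D b) (tl D a)).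

Definition is_lub (S : A -> Prop) (x : A) : Prop :=
  (forall s, S s -> le s x) /\ (forall y, (forall s, S s -> le s y) -> le x y).
Definition is_glb (S : A -> Prop) (x : A) : Prop :=
  (forall s, S s -> le x s) /\ (forall y, (forall s, S s -> le y s) -> le y x).

Definition complete : Prop :=
  forall S : A -> Prop, (exists x, is_lub S x) /\ (exists x, is_glb S x).

Definition Jinf (j : A) : Prop := forall S : A -> Prop, is_lub S j -> S j.
Definition Minf (m : A) : Prop := forall S : A -> Prop, is_glb S m -> S m.

Definition perfect : Prop :=
  forall a : A, is_lub (fun j => Jinf j /\ le j a) a /\
                is_glb (fun m => Minf m /\ le a m) a.

Definition complete_perfect : Prop := complete /\ perfect.

(* kappa(j) = \/ { a | ~ j <= a } (well defined when A is complete) *)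
Definition kappa (j : A) : A :=
  epsilon (inhabits (one D)) (fun k => is_lub (fun a => ~ le j a) k).

(* The frame A_+ on W = J^inf(A): x ≼ y iff y <= x *)
Definition prec (x y : A) : Prop := le y x.
Definition I1 (i : A) : Prop := Jinf i /\ le i (one D).
Definition circ (a b c : A) : Prop := Jinf c /\ le c (mul D a b).
Definition wtl (a : A) : A := tl D (kappa a).
Definition wmi (a : A) : A := mi D (kappa a).
Definition wng (a : A) : A := ng D (kappa a).

(* The complex algebra (A_+)^+ on upsets of (J^inf(A), ≼) *)
Definition upset (U : A -> Prop) : Prop :=
  (forall x, U x -> Jinf x) /\
  (forall x y, U x -> Jinf y -> prec x y -> U y).

Definition Ucap (U V : A -> Prop) : A -> Prop := fun w => U w /\ V w.
Definition Ucup (U V : A -> Prop) : A -> Prop := fun w => U w \/ V w.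
Definition Ucirc (U V : A -> Prop) : A -> Prop :=
  fun c => exists x y, U x /\ V y /\ circ x y c.
Definition Utl (U : A -> Prop) : A -> Prop := fun w => Jinf w /\ ~ U (wmi w).
Definition Umi (U : A -> Prop) : A -> Prop := fun w => Jinf w /\ ~ U (wtl w).
Definition Ung (U : A -> Prop) : A -> Prop := fun w => Jinf w /\ ~ U (wng w).

Definition psi (a : A) : A -> Prop := fun j => Jinf j /\ le j a.

Definition seteq (U V : A -> Prop) : Prop := forall x, U x <-> V x.

End DqRADefs.

(* In a complete perfect distributive lattice every completely join-irreducible
   j is completely join-prime: there is a completely meet-irreducible m with
   [~ j <= a <-> a <= m], and this m is kappa(j).  Join-primeness makes psi
   preserve arbitrary joins (hence products, which are residuated in each
   argument) and makes it onto the upsets; perfection makes it injective.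
   The unary operations ~, - and negation are order-reversing bijections, and
   kappa converts [j <= g a] into [~ f (kappa j) <= a] for the inverse f of g,
   which is exactly the clause defining ~U, -U and negation on upsets. *)
From Stdlib Require Import Classical ClassicalEpsilon.

Section Representation.

Variable A : Type.
Variable D : DqRA A.

Local Notation "x ⊑ y" := (le D x y) (at level 70, no associativity).
Local Notation "x ⊓ y" := (meet D x y) (at level 40, left associativity).
Local Notation "x ⊔ y" := (join D x y) (at level 50, left associativity).
Local Notation "x ⊗ y" := (mul D x y) (at level 40, left associativity).

Lemma meet_idem a : a ⊓ a = a.
Proof.
  transitivity (a ⊓ (a ⊔ a ⊓ a)); [now rewrite join_meetK | apply meet_joinK].
Qed.

Lemma le_refl a : a ⊑ a.
Proof. apply meet_idem. Qed.

Lemma le_trans a b c : a ⊑ b -> b ⊑ c -> a ⊑ c.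
Proof. unfold le; intros Hab Hbc. now rewrite <- Hab, <- meetA, Hbc. Qed.

Lemma le_antisym a b : a ⊑ b -> b ⊑ a -> a = b.
Proof. unfold le; intros Hab Hba. now rewrite <- Hab, meetC. Qed.

Lemma le_joinE a b : a ⊑ b <-> a ⊔ b = b.
Proof.
  unfold le; split; intro H; rewrite <- H.
  - now rewrite joinC, meetC, join_meetK.
  - apply meet_joinK.
Qed.

Lemma meet_lb_l a b : a ⊓ b ⊑ a.
Proof. unfold le. now rewrite meetC, meetA, meet_idem. Qed.

Lemma meet_lb_r a b : a ⊓ b ⊑ b.
Proof. unfold le. now rewrite <- meetA, meet_idem. Qed.

Lemma meet_glb x a b : x ⊑ a -> x ⊑ b -> x ⊑ a ⊓ b.
Proof. unfold le; intros Ha Hb. now rewrite meetA, Ha, Hb. Qed.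

Lemma join_ub_l a b : a ⊑ a ⊔ b.
Proof. apply meet_joinK. Qed.

Lemma join_ub_r a b : b ⊑ a ⊔ b.
Proof. rewrite joinC. apply join_ub_l. Qed.

Lemma join_lub a b c : a ⊑ c -> b ⊑ c -> a ⊔ b ⊑ c.
Proof.
  rewrite !le_joinE; intros Ha Hb. now rewrite <- joinA, Hb, Ha.
Qed.

Lemma distr_le_of_join x a m : x ⊑ a ⊔ m -> x ⊓ a ⊑ m -> x ⊑ m.
Proof.
  intros Hx Hxa. unfold le in Hx. rewrite <- Hx, meet_joinDr.
  apply join_lub; [exact Hxa | apply meet_lb_r].
Qed.

Lemma lub_unique S x y : is_lub D S x -> is_lub D S y -> x = y.
Proof. intros [Hx Hxl] [Hy Hyl]. apply le_antisym; auto. Qed.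

Lemma join_is_lub a b : is_lub D (fun x => x = a \/ x = b) (a ⊔ b).
Proof.
  split.
  - intros s [-> | ->]; [apply join_ub_l | apply join_ub_r].
  - intros y Hy. apply join_lub; apply Hy; auto.
Qed.

Lemma mul_mono_l a a' b : a ⊑ a' -> a ⊗ b ⊑ a' ⊗ b.
Proof.
  intro H. apply resid_l. apply le_trans with a'; [exact H|].
  apply resid_l, le_refl.
Qed.

Lemma mul_mono_r a b b' : b ⊑ b' -> a ⊗ b ⊑ a ⊗ b'.
Proof.
  intro H. apply resid_r. apply le_trans with b'; [exact H|].
  apply resid_r, le_refl.
Qed.

Lemma mul_lub_l S s b : is_lub D S s ->
  is_lub D (fun z => exists x, S x /\ z = x ⊗ b) (s ⊗ b).
Proof.
  intros [Hub Hleast]. split.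
  - intros z [x [Hx ->]]. apply mul_mono_l, Hub, Hx.
  - intros y Hy. apply resid_l, Hleast. intros x Hx. apply resid_l, Hy. eauto.
Qed.

Lemma mul_lub_r S s a : is_lub D S s ->
  is_lub D (fun z => exists x, S x /\ z = a ⊗ x) (a ⊗ s).
Proof.
  intros [Hub Hleast]. split.
  - intros z [x [Hx ->]]. apply mul_mono_r, Hub, Hx.
  - intros y Hy. apply resid_r, Hleast. intros x Hx. apply resid_r, Hy. eauto.
Qed.

Lemma tl_mi c : tl D (mi D c) = c.
Proof.
  pose proof (resid_r _ D (one D) c c) as Hc.
  pose proof (resid_r _ D (one D) (tl D (mi D c)) c) as Htc.
  rewrite !mul1l, !mul1r in Hc, Htc.
  apply le_antisym; [apply Htc | apply Hc]; apply le_refl.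
Qed.

Lemma mi_tl c : mi D (tl D c) = c.
Proof.
  pose proof (resid_l _ D c (one D) c) as Hc.
  pose proof (resid_l _ D (mi D (tl D c)) (one D) c) as Hmc.
  rewrite !mul1l, !mul1r in Hc, Hmc.
  apply le_antisym; [apply Hmc | apply Hc]; apply le_refl.
Qed.

(* [mi 1] and [tl 1] are the "falsum" of the two residuals: [x ⊗ y ⊑ mi 1]
   says that x lies below [mi y], and [x ⊗ y ⊑ tl 1] that y lies below [tl x]. *)
Lemma mi_anti x y : x ⊑ y -> mi D y ⊑ mi D x.
Proof.
  assert (K : forall z w, z ⊗ w ⊑ mi D (one D) <-> z ⊑ mi D w).
  { intros z w. pose proof (resid_l _ D z w (mi D (one D))) as R.
    now rewrite tl_mi, mul1r in R. }
  intro Hxy. apply K. apply le_trans with (mi D y ⊗ y).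
  - apply mul_mono_r, Hxy.
  - apply K, le_refl.
Qed.

Lemma tl_anti x y : x ⊑ y -> tl D y ⊑ tl D x.
Proof.
  assert (K : forall z w, z ⊗ w ⊑ tl D (one D) <-> w ⊑ tl D z).
  { intros z w. pose proof (resid_r _ D z w (tl D (one D))) as R.
    now rewrite mi_tl, mul1l in R. }
  intro Hxy. apply K. apply le_trans with (y ⊗ tl D y).
  - apply mul_mono_l, Hxy.
  - apply K, le_refl.
Qed.

Lemma ng_anti x y : x ⊑ y -> ng D y ⊑ ng D x.
Proof.
  intro H. apply le_joinE. now rewrite joinC, <- ng_meet, H.
Qed.

Section CompletePerfect.

Hypothesis HC : complete D.
Hypothesis HP : perfect D.

Lemma Jinf_lower_cover j : Jinf D j ->
  exists js, ~ j ⊑ js /\ forall x, x ⊑ j -> x <> j -> x ⊑ js.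
Proof.
  intro Hj.
  destruct (proj1 (HC (fun x => x ⊑ j /\ x <> j))) as [js Hjs].
  exists js. split; [| intros x Hxj Hx; apply (proj1 Hjs); auto].
  intro Hjjs.
  assert (E : js = j).
  { apply le_antisym; [apply (proj2 Hjs); now intros s [Hs _] | exact Hjjs]. }
  subst js. destruct (Hj _ Hjs) as [_ Hne]. exact (Hne eq_refl).
Qed.

Lemma Minf_upper_cover m : Minf D m ->
  exists ms, ~ ms ⊑ m /\ forall y, m ⊑ y -> y <> m -> ms ⊑ y.
Proof.
  intro Hm.
  destruct (proj2 (HC (fun y => m ⊑ y /\ y <> m))) as [ms Hms].
  exists ms. split; [| intros y Hmy Hy; apply (proj1 Hms); auto].
  intro Hmsm.
  assert (E : ms = m).
  { apply le_antisym; [exact Hmsm | apply (proj2 Hms); now intros s [Hs _]]. }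
  subst ms. destruct (Hm _ Hms) as [_ Hne]. exact (Hne eq_refl).
Qed.

Lemma perfect_separate j c : ~ j ⊑ c -> exists m, Minf D m /\ c ⊑ m /\ ~ j ⊑ m.
Proof.
  intro Hjc. apply NNPP. intro Hno. apply Hjc, (proj2 (proj2 (HP c))).
  intros m [Hm Hcm]. apply NNPP. intro Hjm. apply Hno. eauto.
Qed.

(* m is found by separating j from its lower cover js; the upper cover ms of m
   then lies above j, and distributivity forces every a with [~ j ⊑ a] below m. *)
Lemma Jinf_prime_witness j : Jinf D j ->
  exists m, Minf D m /\ forall a, ~ j ⊑ a <-> a ⊑ m.
Proof.
  intro Hj.
  destruct (Jinf_lower_cover j Hj) as [js [Hjjs Hbelow]].
  destruct (perfect_separate j js Hjjs) as [m [Hm [Hjsm Hjm]]].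
  destruct (Minf_upper_cover m Hm) as [ms [Hmsm Habove]].
  assert (Hcut : forall a, ~ j ⊑ a -> j ⊓ a ⊑ m).
  { intros a Ha. apply le_trans with js; [apply Hbelow, Ha; apply meet_lb_l | exact Hjsm]. }
  assert (Hjump : forall a, ~ a ⊑ m -> ms ⊑ a ⊔ m).
  { intros a Ha. apply Habove; [apply join_ub_r | now rewrite <- le_joinE]. }
  assert (Hjms : j ⊑ ms).
  { apply NNPP. intro Hn. apply Hmsm, (distr_le_of_join _ j); [now apply Hjump|].
    rewrite meetC. now apply Hcut. }
  exists m. split; [exact Hm|]. intro a. split.
  - intro Ha. apply NNPP. intro Ham. apply Hjm, (distr_le_of_join _ a); [|now apply Hcut].
    apply le_trans with ms; [exact Hjms | now apply Hjump].
  - intros Ham Hja. exact (Hjm (le_trans _ _ _ Hja Ham)).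
Qed.

Lemma Jinf_complete_prime j S x :
  Jinf D j -> is_lub D S x -> j ⊑ x -> exists s, S s /\ j ⊑ s.
Proof.
  intros Hj [Hub Hleast] Hjx.
  destruct (Jinf_prime_witness j Hj) as [m [_ Hm]].
  apply NNPP. intro Hn. apply (proj2 (Hm x)); [| exact Hjx].
  apply Hleast. intros s Hs. apply Hm. eauto.
Qed.

Lemma kappa_spec j : Jinf D j ->
  Minf D (kappa D j) /\ forall a, ~ j ⊑ a <-> a ⊑ kappa D j.
Proof.
  intro Hj.
  destruct (Jinf_prime_witness j Hj) as [m [Hm Hjm]].
  assert (E : kappa D j = m).
  { apply (lub_unique (fun a => ~ j ⊑ a)).
    - exact (epsilon_spec _ (fun k => is_lub D (fun a => ~ j ⊑ a) k) (proj1 (HC _))).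
    - split; [apply Hjm | intros y Hy; apply Hy, Hjm, le_refl]. }
  now rewrite E.
Qed.

Lemma psi_upset a : upset D (psi D a).
Proof.
  split; [now intros x [Hx _] |].
  intros x y [_ Hxa] Hy Hyx. split; [exact Hy | exact (le_trans _ _ _ Hyx Hxa)].
Qed.

Lemma psi_injective a b : seteq (psi D a) (psi D b) -> a = b.
Proof.
  intro E. apply (lub_unique (psi D a)); [exact (proj1 (HP a)) |].
  destruct (proj1 (HP b)) as [Hub Hleast].
  split; [intros s Hs; apply Hub, E, Hs | intros y Hy; apply Hleast; intros s Hs; apply Hy, E, Hs].
Qed.

Lemma psi_surjective U : upset D U -> exists a, seteq (psi D a) U.
Proof.
  intros [HUJ HUup]. destruct (proj1 (HC U)) as [x Hx]. exists x. intro j. split.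
  - intros [Hj Hjx]. destruct (Jinf_complete_prime j U x Hj Hx Hjx) as [s [Hs Hjs]].
    exact (HUup s j Hs Hj Hjs).
  - intro Hj. split; [apply HUJ, Hj | apply (proj1 Hx), Hj].
Qed.

Lemma psi_meet a b : seteq (psi D (a ⊓ b)) (Ucap (psi D a) (psi D b)).
Proof.
  intro j. split.
  - intros [Hj H]. split; split; try exact Hj; eapply le_trans; eauto.
    + apply meet_lb_l.
    + apply meet_lb_r.
  - intros [[Hj Ha] [_ Hb]]. split; [exact Hj | now apply meet_glb].
Qed.

Lemma psi_join a b : seteq (psi D (a ⊔ b)) (Ucup (psi D a) (psi D b)).
Proof.
  intro j. split.
  - intros [Hj H].
    destruct (Jinf_complete_prime j _ _ Hj (join_is_lub a b) H) as [s [[-> | ->] Hs]];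
      [left | right]; now split.
  - intros [[Hj H] | [Hj H]]; split; try exact Hj; eapply le_trans; eauto.
    + apply join_ub_l.
    + apply join_ub_r.
Qed.

Lemma psi_mul a b : seteq (psi D (a ⊗ b)) (Ucirc D (psi D a) (psi D b)).
Proof.
  intro j. split.
  - intros [Hj H].
    destruct (Jinf_complete_prime j _ _ Hj (mul_lub_l _ _ b (proj1 (HP a))) H)
      as [z [[x [Hx ->]] Hjx]].
    destruct (Jinf_complete_prime j _ _ Hj (mul_lub_r _ _ x (proj1 (HP b))) Hjx)
      as [z [[y [Hy ->]] Hjy]].
    exists x, y. repeat split; tauto.
  - intros [x [y [[_ Hxa] [[_ Hyb] [Hj H]]]]]. split; [exact Hj |].
    apply le_trans with (x ⊗ y); [exact H |].
    apply le_trans with (a ⊗ y); [apply mul_mono_l | apply mul_mono_r]; assumption.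
Qed.

Section AntitoneBijection.

Variables f g : A -> A.
Hypothesis f_anti : forall x y, x ⊑ y -> f y ⊑ f x.
Hypothesis g_anti : forall x y, x ⊑ y -> g y ⊑ g x.
Hypothesis gK : forall x, f (g x) = x.
Hypothesis fK : forall x, g (f x) = x.

Lemma anti_adjoint_l x b : f x ⊑ b <-> g b ⊑ x.
Proof.
  split; intro H.
  - rewrite <- (fK x). now apply g_anti.
  - rewrite <- (gK b). now apply f_anti.
Qed.

Lemma anti_adjoint_r x b : x ⊑ g b <-> b ⊑ f x.
Proof.
  split; intro H.
  - rewrite <- (gK b). now apply f_anti.
  - rewrite <- (fK x). now apply g_anti.
Qed.

Lemma Minf_anti_Jinf m : Minf D m -> Jinf D (f m).
Proof.
  intros Hm S [Hub Hleast].
  assert (Hglb : is_glb D (fun x => exists s, S s /\ x = g s) m).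
  { split.
    - intros x [s [Hs ->]]. apply anti_adjoint_r, Hub, Hs.
    - intros y Hy. rewrite <- (fK m). apply anti_adjoint_r, Hleast.
      intros s Hs. apply anti_adjoint_r, Hy. eauto. }
  destruct (Hm _ Hglb) as [s [Hs E]]. now rewrite E, gK.
Qed.

Lemma psi_anti a : seteq (psi D (g a)) (fun w => Jinf D w /\ ~ psi D a (f (kappa D w))).
Proof.
  intro j. split; intros [Hj H]; split; try exact Hj;
    destruct (kappa_spec j Hj) as [Hk Hkj].
  - intros [_ Hfa]. apply anti_adjoint_l, Hkj in Hfa. contradiction.
  - apply NNPP. intro Hn. apply H. split.
    + now apply Minf_anti_Jinf.
    + now apply anti_adjoint_l, Hkj.
Qed.

End AntitoneBijection.

Lemma psi_tl a : seteq (psi D (tl D a)) (Utl D (psi D a)).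
Proof. exact (psi_anti (mi D) (tl D) mi_anti tl_anti mi_tl tl_mi a). Qed.

Lemma psi_mi a : seteq (psi D (mi D a)) (Umi D (psi D a)).
Proof. exact (psi_anti (tl D) (mi D) tl_anti mi_anti tl_mi mi_tl a). Qed.

Lemma psi_ng a : seteq (psi D (ng D a)) (Ung D (psi D a)).
Proof. exact (psi_anti (ng D) (ng D) ng_anti ng_anti (ngK _ D) (ngK _ D) a). Qed.

End CompletePerfect.

End Representation.

Theorem mainTheorem11 (A : Type) (D : DqRA A) :
  complete_perfect D ->
  (* psi is a bijection from A onto Up(J^inf(A), ≼) *)
  (forall a, upset D (psi D a)) /\
  (forall a b, seteq (psi D a) (psi D b) -> a = b) /\
  (forall U, upset D U -> exists a, seteq (psi D a) U) /\
  (* and a DqRA homomorphism A -> (A_+)^+ *)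
  (forall a b, seteq (psi D (meet D a b)) (Ucap (psi D a) (psi D b))) /\
  (forall a b, seteq (psi D (join D a b)) (Ucup (psi D a) (psi D b))) /\
  (forall a b, seteq (psi D (mul D a b)) (Ucirc D (psi D a) (psi D b))) /\
  seteq (psi D (one D)) (I1 D) /\
  (forall a, seteq (psi D (tl D a)) (Utl D (psi D a))) /\
  (forall a, seteq (psi D (mi D a)) (Umi D (psi D a))) /\
  (forall a, seteq (psi D (ng D a)) (Ung D (psi D a))).
Proof.
  intros [HC HP].
  split; [exact (psi_upset A D) |].
  split; [exact (psi_injective A D HP) |].
  split; [exact (psi_surjective A D HC HP) |].
  split; [exact (psi_meet A D) |].
  split; [exact (psi_join A D HC HP) |].
  split; [exact (psi_mul A D HC HP) |].
  split; [intro j; reflexivity |].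
  split; [exact (psi_tl A D HC HP) |].
  split; [exact (psi_mi A D HC HP) |].
  exact (psi_ng A D HC HP).
Qed.
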